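(* Suppose $F$ satisfies Assumption 1 and let $v\in[0,1]$ with $F(b^*_{v,F})>0$. Let $W_{v,F}(q)=U_{v,F}(F^{-1}(q))$ for $q\in[0,1]$ and $q^*_{v,F}=F(b^*_{v,F})$. Then for every $q\in[0,1]$, $$W_{v,F}(q^*_{v,F})-W_{v,F}(q)\ \ge\ \frac14\,(q^*_{v,F}-q)^2\,W_{v,F}(q^*_{v,F}).$$
   Context: Assumption 1: $F$ is a cumulative distribution function on $[0,1]$ which is continuously differentiable with density $f=F'$ and is strictly log-concave (equivalently $f/F$ is strictly decreasing on $(0,1)$); in particular $F$ is increasing and has an inverse $F^{-1}$. $U_{v,F}(b)=(v-b)F(b)$ and $b^*_{v,F}=\max\{\operatorname{argmax}_{b\in[0,1]}U_{v,F}(b)\}$. *)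

From Stdlib Require Import Reals.
From Coquelicot Require Import Coquelicot.
Open Scope R_scope.

Definition Assumption1 (F f : R -> R) : Prop :=
  F 0 = 0 /\ F 1 = 1 /\
  (forall x y, 0 <= x -> x <= y -> y <= 1 -> F x <= F y) /\
  (forall x, 0 <= x <= 1 -> 0 <= f x) /\
  (forall x, 0 <= x <= 1 ->
     filterlim F (within (fun y => 0 <= y <= 1) (locally x)) (locally (F x))) /\
  (forall x, 0 < x < 1 -> is_derive F x (f x)) /\
  (forall x, 0 < x < 1 -> continuous f x) /\
  (* strict log-concavity: f/F strictly decreasing on (0,1) *)
  (forall x y, 0 < x -> x < y -> y < 1 -> f y / F y < f x / F x).

Definition U (F : R -> R) (v b : R) : R := (v - b) * F b.

Definition is_bstar (F : R -> R) (v b : R) : Prop :=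
  0 <= b <= 1 /\
  (forall c, 0 <= c <= 1 -> U F v c <= U F v b) /\
  (forall c, 0 <= c <= 1 -> U F v c = U F v b -> c <= b).

Definition is_inverse_on01 (F Finv : R -> R) : Prop :=
  forall q, 0 <= q <= 1 -> 0 <= Finv q <= 1 /\ F (Finv q) = q.

Definition W (F Finv : R -> R) (v q : R) : R := U F v (Finv q).

From Stdlib Require Import Reals Lra Psatz.
From Coquelicot Require Import Coquelicot.
Open Scope R_scope.

(* Write bstar for the maximiser, qstar = F bstar and k = v - bstar, so that
   W(qstar) = k qstar.
   1. Under Assumption 1, F is strictly increasing on [0,1] (a flat piece
      would force f = 0 there, contradicting strict decrease of f/F); hence
      F > 0 on (0,1], F is injective and F^{-1} maps (0,1) into (0,1).
   2. bstar lies in (0,v), and the first-order condition k f(bstar) = qstar holds.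
   3. Since (ln F)' = f/F is decreasing, ln F lies below its tangent at bstar:
      ln F(b) <= ln qstar + (b - bstar)/k.  With b = F^{-1} q this gives
      W(q) = (v - b) q <= k q (1 + ln qstar - ln q) <= k (2 sqrt(q qstar) - q),
      the last step being ln t <= t - 1 applied to t = sqrt(qstar/q).
   4. With a = sqrt q, c = sqrt qstar, the gap is then at least k (c - a)^2,
      while (qstar - q)^2 W(qstar) / 4 = k (c - a)^2 (c + a)^2 c^2 / 4 <= k (c - a)^2.
   The endpoints q = 0 and q = 1 have W(q) <= 0 and are immediate. *)

Lemma ln_le_pred (u : R) : 0 < u -> ln u <= u - 1.
Proof.
  intros Hu.
  pose proof (exp_ineq1_le (ln u)) as H.
  rewrite exp_ln in H by exact Hu. lra.
Qed.

Lemma log_gap_bound (x y : R) :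
  0 < x -> 0 < y -> x * (1 + (ln y - ln x)) <= 2 * (sqrt x * sqrt y) - x.
Proof.
  intros Hx Hy.
  set (a := sqrt x). set (c := sqrt y).
  assert (Ha : 0 < a) by (apply sqrt_lt_R0; exact Hx).
  assert (Hc : 0 < c) by (apply sqrt_lt_R0; exact Hy).
  assert (Haa : a * a = x) by (apply sqrt_sqrt; lra).
  assert (Hcc : c * c = y) by (apply sqrt_sqrt; lra).
  assert (Hlog : ln y - ln x = 2 * ln (c / a)).
  { rewrite <- Haa, <- Hcc, !ln_mult by lra.
    unfold Rdiv. rewrite ln_mult, ln_Rinv by (try apply Rinv_0_lt_compat; lra). ring. }
  pose proof (ln_le_pred (c / a) ltac:(apply Rdiv_lt_0_compat; lra)) as Hln.
  rewrite Hlog, <- Haa.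
  assert (Hscaled : a * a * ln (c / a) <= a * c - a * a).
  { replace (a * c - a * a) with (a * a * (c / a - 1)) by (field; lra).
    apply Rmult_le_compat_l; nra. }
  nra.
Qed.

Lemma tangent_above (g dg : R -> R) (lo hi x0 x : R) :
  (forall t, lo < t < hi -> is_derive g t (dg t)) ->
  (forall s t, lo < s -> s <= t -> t < hi -> dg t <= dg s) ->
  lo < x0 < hi -> lo < x < hi ->
  g x <= g x0 + dg x0 * (x - x0).
Proof.
  intros Hder Hdec Hx0 Hx.
  assert (Hrange : forall t, Rmin x0 x <= t <= Rmax x0 x -> lo < t < hi).
  { intros t Ht.
    assert (lo < Rmin x0 x) by (apply Rmin_glb_lt; lra).
    assert (Rmax x0 x < hi) by (apply Rmax_lub_lt; lra). lra. }
  destruct (MVT_gen g x0 x dg) as (c & Hc & Hmvt).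
  - intros t Ht. apply Hder, Hrange. lra.
  - intros t Ht. apply continuity_pt_filterlim, (ex_derive_continuous g).
    exists (dg t). apply Hder, Hrange, Ht.
  - pose proof (Hrange c Hc) as Hc_in.
    assert (Hslope : dg c * (x - x0) <= dg x0 * (x - x0)).
    { destruct (Rle_or_lt x0 x) as [Hle | Hlt].
      - rewrite Rmin_left in Hc by lra.
        apply Rmult_le_compat_r; [lra | apply Hdec; lra].
      - rewrite Rmax_left in Hc by lra.
        assert (dg x0 <= dg c) by (apply Hdec; lra). nra. }
    lra.
Qed.

Section CDF.
  Variables F f : R -> R.
  Hypothesis HF : Assumption1 F f.

  (* F is strictly increasing on [0,1]: on a flat piece f vanishes, so f/F
     would be constant (zero) there, contradicting strict log-concavity. *)
  Lemma cdf_strict_mono (x y : R) : 0 <= x -> x < y -> y <= 1 -> F x < F y.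
  Proof.
    intros Hx Hxy Hy.
    destruct HF as (_ & _ & Hmon & _ & _ & Hd & _ & Hlc).
    destruct (Rlt_or_le (F x) (F y)) as [Hlt | Hle]; [exact Hlt | exfalso].
    assert (Hflat : forall z, x <= z <= y -> F z = F x).
    { intros z Hz.
      assert (F x <= F z) by (apply Hmon; lra).
      assert (F z <= F y) by (apply Hmon; lra). lra. }
    set (d := (y - x) / 3).
    assert (Hdpos : 0 < d) by (unfold d; lra).
    assert (Hzero : forall z, x + d <= z <= x + 2 * d -> f z = 0).
    { intros z Hz.
      assert (Hconst : is_derive (fun _ => F x) z (f z)).
      { apply (is_derive_ext_loc F); [| apply Hd; unfold d in *; lra].
        exists (mkposreal d Hdpos). intros t Ht.
        change (Rabs (t - z) < d) in Ht. apply Rabs_lt_between in Ht.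
        apply Hflat. unfold d in *; lra. }
      apply is_derive_unique in Hconst. rewrite Derive_const in Hconst. lra. }
    pose proof (Hlc (x + d) (x + 2 * d) ltac:(lra) ltac:(lra) ltac:(unfold d; lra)) as H.
    rewrite (Hzero (x + d)), (Hzero (x + 2 * d)) in H by lra.
    unfold Rdiv in H. lra.
  Qed.

  Lemma cdf_pos (x : R) : 0 < x <= 1 -> 0 < F x.
  Proof.
    intros Hx. destruct HF as (H0 & _).
    rewrite <- H0. apply cdf_strict_mono; lra.
  Qed.

  Lemma cdf_inj (x y : R) : 0 <= x <= 1 -> 0 <= y <= 1 -> F x = F y -> x = y.
  Proof.
    intros Hx Hy Hxy.
    destruct (Rtotal_order x y) as [Hlt | [Heq | Hgt]]; [| exact Heq |].
    - pose proof (cdf_strict_mono x y ltac:(lra) Hlt ltac:(lra)). lra.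
    - pose proof (cdf_strict_mono y x ltac:(lra) Hgt ltac:(lra)). lra.
  Qed.

  Lemma inverse_interior (Finv : R -> R) (q : R) :
    is_inverse_on01 F Finv -> 0 < q < 1 -> 0 < Finv q < 1.
  Proof.
    intros HI Hq. destruct HF as (H0 & H1 & _).
    destruct (HI q) as [Hr He]; [lra |].
    split.
    - destruct (Req_dec (Finv q) 0) as [E | E]; [rewrite E, H0 in He; lra | lra].
    - destruct (Req_dec (Finv q) 1) as [E | E]; [rewrite E, H1 in He; lra | lra].
  Qed.

  Lemma log_cdf_tangent (b0 b : R) :
    0 < b0 < 1 -> 0 < b < 1 ->
    ln (F b) <= ln (F b0) + f b0 / F b0 * (b - b0).
  Proof.
    intros Hb0 Hb.
    destruct HF as (_ & _ & _ & _ & _ & Hd & _ & Hlc).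
    apply (tangent_above (fun t => ln (F t)) (fun t => f t / F t) 0 1); auto.
    - intros t Ht. unfold Rdiv.
      apply (is_derive_comp ln F t (/ F t) (f t)).
      + apply is_derive_ln, cdf_pos. lra.
      + apply Hd, Ht.
    - intros s t Hs Hst Ht.
      destruct (Req_dec s t) as [E | E]; [subst; lra |].
      left. apply Hlc; lra.
  Qed.

  Section Maximiser.
    Variables v bstar : R.
    Hypothesis Hv : 0 <= v <= 1.
    Hypothesis HB : is_bstar F v bstar.
    Hypothesis Hpos : F bstar > 0.

    Lemma bstar_pos : 0 < bstar.
    Proof.
      destruct HF as (H0 & _). destruct HB as (Hb & _).
      destruct (Req_dec bstar 0) as [E | E]; [rewrite E, H0 in Hpos; lra | lra].
    Qed.

    (* The maximiser lies strictly below the value: U(bstar) >= U(bstar/2) > 0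
       when bstar = v, and U(bstar) >= U(0) = 0 rules out bstar > v. *)
    Lemma bstar_lt_v : bstar < v.
    Proof.
      pose proof bstar_pos as Hb0.
      destruct HF as (H0 & _). destruct HB as (Hb & Hmax & _).
      destruct (Rlt_or_le bstar v) as [Hlt | Hle]; [exact Hlt | exfalso].
      pose proof (Hmax 0 ltac:(lra)) as HU0.
      pose proof (Hmax (bstar / 2) ltac:(lra)) as HUhalf.
      pose proof (cdf_pos (bstar / 2) ltac:(lra)) as Hhalf.
      unfold U in HU0, HUhalf. rewrite H0 in HU0.
      assert (v = bstar) by nra. subst v. nra.
    Qed.

    Lemma bstar_foc : (v - bstar) * f bstar = F bstar.
    Proof.
      pose proof bstar_pos. pose proof bstar_lt_v.
      destruct HF as (_ & _ & _ & _ & _ & Hd & _). destruct HB as (_ & Hmax & _).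
      assert (Hder : is_derive (U F v) bstar (-1 * F bstar + (v - bstar) * f bstar)).
      { unfold U.
        apply (is_derive_mult (fun t => v - t) F).
        - auto_derive; [trivial | ring].
        - apply Hd; lra.
        - intros; apply Rmult_comm. }
      apply is_derive_Reals in Hder.
      set (pr := exist _ _ Hder : derivable_pt (U F v) bstar).
      pose proof (deriv_maximum (U F v) 0 1 bstar pr ltac:(lra) ltac:(lra)
                    (fun x H0x Hx1 => Hmax x ltac:(lra))) as Hzero.
      rewrite (derive_pt_eq_0 _ _ _ pr Hder) in Hzero. lra.
    Qed.

    (* Upper bound on W from the tangent line of ln F at bstar:
       W(q) <= (v - bstar) (2 sqrt q sqrt qstar - q) on (0,1). *)
    Lemma W_upper (Finv : R -> R) (q : R) :
      is_inverse_on01 F Finv -> 0 < q < 1 ->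
      W F Finv v q <= (v - bstar) * (2 * (sqrt q * sqrt (F bstar)) - q).
    Proof.
      intros HI Hq.
      pose proof bstar_pos. pose proof bstar_lt_v. pose proof bstar_foc as Hfoc.
      destruct (HI q) as [_ Heq]; [lra |].
      pose proof (inverse_interior Finv q HI Hq) as Hb.
      set (b := Finv q) in *.
      pose proof (log_cdf_tangent bstar b ltac:(lra) Hb) as Htan.
      rewrite Heq in Htan.
      assert (Hslope : f bstar / F bstar = / (v - bstar)).
      { rewrite <- Hfoc. field. split; [lra |].
        intro Hf0. rewrite Hf0, Rmult_0_r in Hfoc. lra. }
      rewrite Hslope in Htan.
      assert (Hb_lower : (v - b) <= (v - bstar) * (1 + (ln (F bstar) - ln q))).
      { apply (Rmult_le_compat_l (v - bstar)) in Htan; [| lra].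
        replace ((v - bstar) * (ln (F bstar) + / (v - bstar) * (b - bstar)))
          with ((v - bstar) * ln (F bstar) + (b - bstar)) in Htan by (field; lra).
        lra. }
      pose proof (log_gap_bound q (F bstar) ltac:(lra) Hpos) as Hgap.
      unfold W, U. fold b. rewrite Heq.
      apply Rle_trans with ((v - bstar) * (q * (1 + (ln (F bstar) - ln q)))).
      - replace ((v - bstar) * (q * (1 + (ln (F bstar) - ln q))))
          with ((v - bstar) * (1 + (ln (F bstar) - ln q)) * q) by ring.
        apply Rmult_le_compat_r; lra.
      - apply Rmult_le_compat_l; lra.
    Qed.
  End Maximiser.
End CDF.

(* The final algebra: with W(q) = w <= k (2ac - a^2), q = a^2, qstar = c^2,
   the gap k c^2 - w is at least k (c - a)^2 >= (c^2 - a^2)^2 k c^2 / 4. *)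
Lemma quadratic_gap (k a c w : R) :
  0 < k -> 0 <= a <= 1 -> 0 <= c <= 1 -> w <= k * (2 * (a * c) - a * a) ->
  k * (c * c) - w >= / 4 * (c * c - a * a) ^ 2 * (k * (c * c)).
Proof.
  intros Hk Ha Hc Hw.
  assert (Hsmall : c * c * (c + a) ^ 2 <= 4).
  { assert (c * c <= 1) by nra. assert (0 <= (c + a) ^ 2 <= 4) by nra. nra. }
  assert (Hsq : 0 <= k * (c - a) ^ 2) by (apply Rmult_le_pos; [lra | apply pow2_ge_0]).
  replace (/ 4 * (c * c - a * a) ^ 2 * (k * (c * c)))
    with (/ 4 * (k * (c - a) ^ 2) * (c * c * (c + a) ^ 2)) by ring.
  assert (Hgap : k * (c - a) ^ 2 <= k * (c * c) - w).
  { replace (k * (c - a) ^ 2) with (k * (c * c) - k * (2 * (a * c) - a * a)) by ring. lra. }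
  assert (Hscale : / 4 * (k * (c - a) ^ 2) * (c * c * (c + a) ^ 2) <= k * (c - a) ^ 2).
  { apply Rmult_le_compat_l with (r := / 4 * (k * (c - a) ^ 2)) in Hsmall; [lra | lra]. }
  lra.
Qed.

Lemma gap_of_nonpos (A w qs q : R) :
  0 < A -> w <= 0 -> 0 <= qs <= 1 -> 0 <= q <= 1 ->
  A - w >= / 4 * (qs - q) ^ 2 * A.
Proof. intros HA Hw Hqs Hq. assert ((qs - q) ^ 2 <= 1) by nra. nra. Qed.

Theorem lemma5 (F f Finv : R -> R) (v bstar : R) :
  Assumption1 F f ->
  is_inverse_on01 F Finv ->
  0 <= v <= 1 ->
  is_bstar F v bstar ->
  F bstar > 0 ->
  forall q, 0 <= q <= 1 ->
    W F Finv v (F bstar) - W F Finv v q >=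
      / 4 * (F bstar - q) ^ 2 * W F Finv v (F bstar).
Proof.
  intros HF HI Hv HB Hpos q Hq.
  pose proof (bstar_lt_v F f HF v bstar Hv HB Hpos) as Hbv.
  assert (Hqs : F bstar <= 1).
  { destruct HF as (_ & H1 & Hmon & _). rewrite <- H1. apply Hmon; destruct HB; lra. }
  assert (HWstar : W F Finv v (F bstar) = (v - bstar) * F bstar).
  { destruct (HI (F bstar)) as [Hr He]; [lra |].
    unfold W, U. rewrite (cdf_inj F f HF _ _ Hr (proj1 HB) He). reflexivity. }
  assert (HWpos : 0 < (v - bstar) * F bstar) by (apply Rmult_lt_0_compat; lra).
  rewrite HWstar.
  destruct (HI q) as [Hr He]; [exact Hq |].
  destruct (Req_dec q 0) as [E0 | N0]; [| destruct (Req_dec q 1) as [E1 | N1]].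
  - apply gap_of_nonpos; [exact HWpos | | lra | lra].
    unfold W, U. rewrite He, E0. lra.
  - apply gap_of_nonpos; [exact HWpos | | lra | lra].
    subst q. assert (Hone : Finv 1 = 1).
    { apply (cdf_inj F f HF); [exact Hr | lra | rewrite He; symmetry; apply HF]. }
    unfold W, U. rewrite He, Hone. lra.
  - pose proof (W_upper F f HF v bstar Hv HB Hpos Finv q HI ltac:(lra)) as Hup.
    assert (Hroot : forall x, 0 <= x <= 1 -> 0 <= sqrt x <= 1).
    { intros x Hx. split; [apply sqrt_pos |].
      rewrite <- sqrt_1. apply sqrt_le_1_alt. lra. }
    pose proof (quadratic_gap (v - bstar) (sqrt q) (sqrt (F bstar)) (W F Finv v q)
                  ltac:(lra) (Hroot q Hq) (Hroot (F bstar) ltac:(lra))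
                  ltac:(rewrite (sqrt_sqrt q) by lra; lra)) as Hgap.
    rewrite !sqrt_sqrt in Hgap by lra. exact Hgap.
Qed.
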